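(* Fix integers $h\ge0$ and $k\ge1$. For a function $\pi:[h]\to[k]$ and $i\in[k]$ let $h_i(\pi)=|\{q\in[h]:\pi(q)=i\}|$. Then for any $C\ge3$, $$\sum_{\pi:[h]\to[k]}\frac{\prod_{i=1}^kh_i(\pi)^{Ch_i(\pi)}}{h^{Ch}}\le\max\Big\{k^7,\ (hk+1)\exp\!\Big(\frac{2k}{h^{C-1}}\Big)\Big\},$$ with the convention $0^0=1$. *)

From HB Require Import structures.
From mathcomp Require Import all_boot all_order all_algebra.
From mathcomp Require Import all_classical all_reals all_analysis.
Set Implicit Arguments. Unset Strict Implicit. Unset Printing Implicit Defensive.
Import Order.TTheory GRing.Theory Num.Theory.
Local Open Scope ring_scope.

Definition fiber_size (h k : nat) (pi : {ffun 'I_h -> 'I_k}) (i : 'I_k) : nat :=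
  #|[set q | pi q == i]|.

From HB Require Import structures.
From mathcomp Require Import all_boot all_order all_algebra.
From mathcomp Require Import all_classical all_reals all_analysis.
From mathcomp Require Import zify ring lra.
Import Order.TTheory GRing.Theory Num.Theory.
Local Open Scope ring_scope.

(* Write h_i = h_i(pi) and, for a fibre size a, mass(a) = (a/h)^a.  Since
   sum_i h_i = h, each summand equals
     weight(pi) * prod_i mass(h_i)^(C-1),   weight(pi) = prod_i mass(h_i).
   For h <= 7 every summand is at most 1 and there are k^h <= k^7 of them.
   For h >= 8 let j be a largest fibre; every other fibre has h_i <= h/2, and
   dropping the j-th factor (a number in [0,1]) bounds the summand by
   weight(pi) * sum_j prod_{i<>j} small_mass(h_i), where small_mass(a) is
   mass(a)^(C-1) for 2a <= h and 0 otherwise.  The multinomial theorem shows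
   that maps with the same fibre sizes have total weight at most 1; grouping
   maps by the fibre sizes other than the j-th gives, for each j, a bound
   sigma^(k-1) with sigma = sum_{a <= h} small_mass(a).  Finally
   sigma <= 1 + 2y with y = h^-(C-1): empty fibres contribute 1, singletons y,
   and a fibre of size a >= 2 at most b_a * y for explicit weights b_a of total
   mass at most 1.  Hence the sum is at most k (1 + 2y)^(k-1) <= k exp(2ky). *)

Set Implicit Arguments.
Unset Strict Implicit.
Unset Printing Implicit Defensive.

Section PowR.
Variable R : realType.

Lemma powR_prod (I : finType) (P : pred I) (F : I -> R) (r : R) :
  (forall i, 0 <= F i) ->
  powR (\prod_(i | P i) F i) r = \prod_(i | P i) powR (F i) r.
Proof.
move=> F_ge0.
suff [] : 0 <= \prod_(i | P i) F i /\
          powR (\prod_(i | P i) F i) r = \prod_(i | P i) powR (F i) r by [].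
apply: (big_ind2 (fun x y => 0 <= x /\ powR x r = y)) => //.
- by rewrite powR1.
- by move=> x1 x2 y1 y2 [x1_ge0 <-] [x2_ge0 <-]; rewrite mulr_ge0 ?powRM.
Qed.

Lemma powR_invl (x r : R) : 0 < x -> powR x^-1 r = (powR x r)^-1.
Proof.
by move=> x_gt0; rewrite /powR !gt_eqF ?invr_gt0// lnV ?posrE// mulrN expRN.
Qed.

Lemma powR_le1 (x r : R) : 0 <= x <= 1 -> 0 <= r -> powR x r <= 1.
Proof.
move=> /andP[x_ge0 x_le1] r_ge0.
by have := ge0_ler_powR r_ge0 _ _ x_le1; rewrite powR1; apply; rewrite ?nnegrE.
Qed.

End PowR.

Section Fibers.
Variables h k : nat.
Implicit Type pi : {ffun 'I_h -> 'I_k}.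

Lemma fiber_sum pi : (\sum_(i < k) fiber_size pi i)%N = h.
Proof.
rewrite -[RHS]card_ord -sum1_card (partition_big pi predT) //=.
by apply: eq_bigr => i _; rewrite /fiber_size cardsE -sum1_card.
Qed.

Lemma fiber_le pi i : (fiber_size pi i <= h)%N.
Proof. by rewrite /fiber_size -[X in (_ <= X)%N]card_ord max_card. Qed.

Lemma fiber_pair pi i j : i != j -> (fiber_size pi i + fiber_size pi j <= h)%N.
Proof.
move=> neq_ij; rewrite -[X in (_ <= X)%N](fiber_sum pi) (bigD1 j) //= (bigD1 i) //=.
by rewrite addnA [(fiber_size pi j + _)%N]addnC leq_addr.
Qed.

Lemma fiber_prod (S : comNzRingType) pi (p : 'I_k -> S) :
  \prod_(q < h) p (pi q) = \prod_(i < k) p i ^+ fiber_size pi i.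
Proof.
rewrite (partition_big pi predT) //=; apply: eq_bigr => i _.
rewrite (eq_bigr (fun _ => p i)) => [|q /eqP -> //].
by rewrite prodr_const /fiber_size cardsE.
Qed.

End Fibers.

Section Weights.
Variable R : realType.
Variables h k : nat.
Implicit Type pi : {ffun 'I_h -> 'I_k}.

Definition summand (C : R) pi : R :=
  (\prod_(i < k) powR (fiber_size pi i)%:R (C * (fiber_size pi i)%:R))
    / powR h%:R (C * h%:R).

(* The mass (a/h)^a of a fibre of size a; the weight of pi is the product of
   the masses of its fibres, i.e. the multinomial probability of pi under the
   empirical distribution of its own fibre sizes. *)
Definition mass (a : nat) : R := (a%:R / h%:R) ^+ a.

Definition weight pi : R := \prod_(i < k) mass (fiber_size pi i).

Lemma mass_ge0 a : 0 <= mass a.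
Proof. by rewrite exprn_ge0 ?divr_ge0. Qed.

Lemma mass_le1 a : (a <= h)%N -> mass a <= 1.
Proof.
move=> le_ah; rewrite exprn_ile1 ?divr_ge0 //.
have [h0|h_gt0] := posnP h; first by rewrite h0 invr0 mulr0.
by rewrite ler_pdivrMr ?ltr0n // mul1r ler_nat.
Qed.

Lemma weight_ge0 pi : 0 <= weight pi.
Proof. by apply: prodr_ge0 => i _; exact: mass_ge0. Qed.

(* Writing h_i^(C h_i) / h^(C h) = prod_i (h_i/h)^(C h_i), the summand
   factors as weight times the (C-1)-th power of the masses. *)
Lemma summand_factor (C : R) pi : (0 < h)%N -> 0 < C ->
  summand C pi =
  weight pi * \prod_(i < k) powR (mass (fiber_size pi i)) (C - 1).
Proof.
move=> h_gt0 C_gt0; rewrite /summand /weight.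
have powR_nat n : powR (n%:R : R) (C * n%:R) = powR (n%:R ^+ n) C.
  by rewrite mulrC powRrM powR_mulrn.
rewrite powR_nat (eq_bigr (fun i => powR ((fiber_size pi i)%:R ^+ fiber_size pi i) C));
  last by move=> i _; rewrite powR_nat.
rewrite -powR_prod => [|i]; last exact: exprn_ge0.
have -> : (h%:R : R) ^+ h = \prod_(i < k) h%:R ^+ fiber_size pi i.
  by rewrite prodrXr fiber_sum.
rewrite -powR_invl; last by apply: prodr_gt0 => i _; rewrite exprn_gt0 ?ltr0n.
rewrite -powRM ?invr_ge0; try by apply: prodr_ge0 => i _; rewrite exprn_ge0.
rewrite -prodf_div (eq_bigr (fun i => mass (fiber_size pi i))); last first.
  by move=> i _; rewrite /mass expr_div_n.
rewrite -powR_prod => [|i]; last exact: mass_ge0.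
by rewrite mulr_powRB1 //; apply: prodr_ge0 => i _; exact: mass_ge0.
Qed.

Lemma summand_le1 (C : R) pi : 1 <= C -> summand C pi <= 1.
Proof.
move=> C_ge1; have [h0|h_gt0] := posnP h.
  have fib0 i : fiber_size pi i = 0%N by apply/eqP; rewrite -leqn0 -h0 fiber_le.
  rewrite /summand [in h%:R]h0 mulr0 powRr0 divr1 big1 // => i _.
  by rewrite fib0 mulr0 powRr0.
have mass_in01 i : 0 <= mass (fiber_size pi i) <= 1.
  by rewrite mass_ge0 mass_le1 ?fiber_le.
rewrite summand_factor //; last by lra.
apply: mulr_ile1; first exact: weight_ge0.
- by apply: prodr_ge0 => i _; exact: powR_ge0.
- by apply: prodr_ile1 => i _; exact: mass_in01.
- apply: prodr_ile1 => i _; rewrite powR_ge0 powR_le1 //; lra.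
Qed.

Lemma small_h_bound (C : R) : (h <= 7)%N -> (0 < k)%N -> 1 <= C ->
  \sum_pi summand C pi <= k%:R ^+ 7.
Proof.
move=> h_le7 k_gt0 C_ge1.
apply: (@le_trans _ _ (\sum_(pi : {ffun 'I_h -> 'I_k}) 1)).
  by apply: ler_sum => pi _; exact: summand_le1.
by rewrite sumr_const card_ffun !card_ord -natrX ler_nat leq_pexp2l.
Qed.

Section OneFreeFiber.
Variable j : 'I_k.

(* The fibre sizes of pi, with the j-th one forgotten; since the sizes add up
   to h, this determines the j-th one as well. *)
Definition sizes_except pi : {ffun 'I_k -> 'I_h.+1} :=
  [ffun i => if i == j then ord0 else inord (fiber_size pi i)].

Lemma sizes_except_fiber pi pi' :
  sizes_except pi = sizes_except pi' -> fiber_size pi =1 fiber_size pi'.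
Proof.
move=> eq_sizes.
have eq_other i : i != j -> fiber_size pi i = fiber_size pi' i.
  move=> neq_ij; have := congr1 (fun s : {ffun 'I_k -> 'I_h.+1} => val (s i)) eq_sizes.
  by rewrite /= !ffunE (negPf neq_ij) /= !inordK // ltnS fiber_le.
move=> i; have [->|/eq_other //] := eqVneq i j.
have := etrans (fiber_sum pi') (esym (fiber_sum pi)).
rewrite (bigD1 j) //= [in RHS](bigD1 j) //=.
by rewrite (eq_bigr _ (fun i neq_ij => eq_other i neq_ij)) => /addIn.
Qed.

(* Maps with the same fibre sizes have total weight at most 1: each weight is
   a product prod_q p (pi q) for one probability vector p, and these products
   sum to (sum_i p_i)^h = 1 over all maps. *)
Lemma class_weight_le1 (s : {ffun 'I_k -> 'I_h.+1}) :
  \sum_(pi | sizes_except pi == s) weight pi <= 1.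
Proof.
have [pi0 /eqP sizes_pi0 | no_pi] := pickP (fun pi => sizes_except pi == s); last first.
  by rewrite big_pred0 ?ler01 // => pi; rewrite no_pi.
pose p (i : 'I_k) : R := (fiber_size pi0 i)%:R / h%:R.
have p_ge0 i : 0 <= p i by rewrite divr_ge0.
apply: (@le_trans _ _ (\sum_(pi : {ffun 'I_h -> 'I_k}) \prod_(q < h) p (pi q))).
  rewrite [X in _ <= X](bigID (fun pi => sizes_except pi == s)) /=.
  apply: ler_wpDr; first by apply: sumr_ge0 => pi _; apply: prodr_ge0.
  apply: ler_sum => pi /eqP sizes_pi; rewrite fiber_prod.
  have same_fib := sizes_except_fiber (etrans sizes_pi (esym sizes_pi0)).
  suff -> : weight pi = \prod_i p i ^+ fiber_size pi i by [].
  by apply: eq_bigr => i _; rewrite /mass /p same_fib.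
rewrite -(bigA_distr_bigA (fun (q : 'I_h) (i : 'I_k) => p i)) /= prodr_const card_ord.
have [->|h_gt0] := posnP h; first by rewrite expr0.
by rewrite -mulr_suml -natr_sum fiber_sum divff ?pnatr_eq0 -?lt0n // expr1n.
Qed.

(* Group the
   maps by sizes_except, bound each class weight by 1, and expand the product
   of sums over the k-1 free fibres. *)
Lemma weighted_sum_le (f : nat -> R) : (forall a, 0 <= f a) ->
  \sum_pi weight pi * \prod_(i < k | i != j) f (fiber_size pi i)
    <= (\sum_(a < h.+1) f a) ^+ k.-1.
Proof.
move=> f_ge0.
pose g (i : 'I_k) (a : 'I_h.+1) : R := if i == j then (a == ord0)%:R else f a.
have g_ge0 i a : 0 <= g i a by rewrite /g; case: ifP.
have prod_g pi : \prod_(i < k | i != j) f (fiber_size pi i)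
                 = \prod_i g i (sizes_except pi i).
  rewrite [RHS](bigD1 j) //= /g ffunE !eqxx mul1r.
  by apply: eq_bigr => i neq_ij; rewrite ffunE (negPf neq_ij) inordK // ltnS fiber_le.
rewrite (partition_big sizes_except predT) //=.
apply: (@le_trans _ _ (\sum_(s : {ffun 'I_k -> 'I_h.+1}) \prod_i g i (s i))).
  apply: ler_sum => s _.
  rewrite (eq_bigr (fun pi => weight pi * \prod_i g i (s i))); last first.
    by move=> pi /eqP <-; rewrite prod_g.
  by rewrite -mulr_suml ler_piMl ?prodr_ge0 // class_weight_le1.
rewrite -(bigA_distr_bigA g) (bigD1 j) //=.
rewrite (eq_bigr (fun a : 'I_h.+1 => (a == ord0)%:R)) => [|a _]; last by rewrite /g eqxx.
rewrite (bigD1 ord0) //= big1 => [|a /negPf -> //]; rewrite addr0 mul1r.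
rewrite (eq_bigr (fun _ => \sum_(a < h.+1) f a)) => [|i neq_ij]; last first.
  by apply: eq_bigr => a _; rewrite /g (negPf neq_ij).
by rewrite prodr_const cardC1 card_ord.
Qed.

End OneFreeFiber.

Definition small_mass (D : R) (a : nat) : R :=
  if (a.*2 <= h)%N then powR (mass a) D else 0.

Lemma small_mass_ge0 D a : 0 <= small_mass D a.
Proof. by rewrite /small_mass; case: ifP => _ //; exact: powR_ge0. Qed.

(* Dropping the factor of a largest fibre j0 (every other fibre then has at
   most h/2 points) bounds the summand by weight times sum over j of the
   product of the small masses of the fibres other than j. *)
Lemma summand_le_small_masses (C : R) pi : (0 < h)%N -> (0 < k)%N -> 1 < C ->
  summand C pi <=
  weight pi * \sum_(j < k) \prod_(i < k | i != j) small_mass (C - 1) (fiber_size pi i).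
Proof.
move=> h_gt0 k_gt0 C_gt1; rewrite summand_factor //; last by lra.
apply: ler_wpM2l; first exact: weight_ge0.
have [j0 _ j0_max] := arg_maxnP (fiber_size pi) (isT : predT (Ordinal k_gt0)).
rewrite [X in _ <= X](bigD1 j0) //=.
have ->: \prod_(i < k | i != j0) small_mass (C - 1) (fiber_size pi i)
         = \prod_(i < k | i != j0) powR (mass (fiber_size pi i)) (C - 1).
  apply: eq_bigr => i neq_ij0; rewrite /small_mass ifT // -addnn.
  by apply: leq_trans (fiber_pair pi neq_ij0); rewrite leq_add2l; exact: j0_max.
rewrite (bigD1 j0) //=.
apply: ler_wpDr.
  by apply: sumr_ge0 => j _; apply: prodr_ge0 => i _; exact: small_mass_ge0.
apply: ler_piMl; first by apply: prodr_ge0 => i _; exact: powR_ge0.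
by rewrite powR_le1 ?mass_ge0 ?mass_le1 ?fiber_le //; lra.
Qed.

Lemma sum_le_total_small_mass (C : R) : (0 < h)%N -> (0 < k)%N -> 1 < C ->
  \sum_pi summand C pi <= k%:R * (\sum_(a < h.+1) small_mass (C - 1) a) ^+ k.-1.
Proof.
move=> h_gt0 k_gt0 C_gt1.
apply: (@le_trans _ _ (\sum_(pi : {ffun 'I_h -> 'I_k}) weight pi *
    \sum_(j < k) \prod_(i < k | i != j) small_mass (C - 1) (fiber_size pi i))).
  by apply: ler_sum => pi _; exact: summand_le_small_masses.
under eq_bigr do rewrite mulr_sumr.
rewrite exchange_big /=.
apply: (@le_trans _ _ (\sum_(j < k) (\sum_(a < h.+1) small_mass (C - 1) a) ^+ k.-1)).
  by apply: ler_sum => j _; apply: weighted_sum_le => a; exact: small_mass_ge0.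
by set total := \sum_(a < h.+1) _; rewrite sumr_const card_ord mulr_natl.
Qed.

End Weights.

Arguments mass {R} h a.

Section TailBound.
Variable R : realType.

(* Weights b_a, a >= 2, of total mass at most 1: 1/4 for a = 2, 3 and
   4/2^a for a >= 4 (so that b_2 + b_3 + sum_{a >= 4} b_a = 1). *)
Definition tail_bound (a : nat) : R := if (a < 4)%N then 4^-1 else 4 / 2 ^+ a.

Lemma tail_bound_ge0 a : 0 <= tail_bound a.
Proof. by rewrite /tail_bound; case: ifP. Qed.

Lemma tail_bound_partial n :
  \sum_(2 <= a < n.+4) tail_bound a = 1 - 8 / 2 ^+ n.+4.
Proof.
elim: n => [|n IHn].
  by rewrite big_nat_recr //= big_nat_recr //= big_geq // /tail_bound /=; field.
rewrite big_nat_recr //= IHn /tail_bound /= !exprS.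
by field; rewrite !expf_neq0 ?pnatr_eq0.
Qed.

Lemma tail_bound_sum n : \sum_(2 <= a < n) tail_bound a <= 1.
Proof.
have [n_lt2|n_ge2] := ltnP n 2; first by rewrite big_geq ?ler01 // ltnW.
apply: (@le_trans _ _ (\sum_(2 <= a < n.+4) tail_bound a)); last first.
  by rewrite tail_bound_partial gerBl divr_ge0.
rewrite (@big_cat_nat _ _ _ n 2 n.+4) //=; last by rewrite -addn4 leq_addr.
by rewrite lerDl sumr_ge0 // => a _; exact: tail_bound_ge0.
Qed.

Lemma sq_le_pow2 a : (4 <= a)%N -> (a ^ 2 <= 2 ^ a)%N.
Proof.
elim: a => [//|a IHa]; rewrite leq_eqVlt => /orP[/eqP <- //|a_ge4].
have := IHa a_ge4; rewrite !expnS !expn0 !muln1; nia.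
Qed.

(* For 2 <= a <= h/2 and h >= 8, (a (a/h)^(a-1))^2 <= b_a: this is the
   quantity whose (C-1)-th power compares the mass of a fibre of size a with
   that of a singleton fibre. *)
Lemma ratio_sq_le (h a : nat) : (8 <= h)%N -> (2 <= a)%N -> (a.*2 <= h)%N ->
  (a%:R * (a%:R / h%:R) ^+ a.-1) ^+ 2 <= tail_bound a :> R.
Proof.
move=> h_ge8 a_ge2 ah.
have h_ge8R : 8 <= h%:R :> R by rewrite (ler_nat R 8).
have t_ge0 : 0 <= a%:R / h%:R :> R by rewrite divr_ge0.
have t_h : a%:R / h%:R * h%:R = a%:R :> R by rewrite divfK // pnatr_eq0; lia.
have t_le8 : 8 * (a%:R / h%:R) <= a%:R :> R.
  by rewrite -[X in _ <= X]t_h mulrC; exact: ler_wpM2l.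
have t_le_half : 2 * (a%:R / h%:R) <= 1 :> R.
  rewrite -(ler_pM2r (_ : 0 < h%:R)) ?ltr0n; last by lia.
  by rewrite -mulrA t_h mul1r -natrM ler_nat mul2n.
move: (a%:R / h%:R) t_ge0 t_le8 t_le_half => t t_ge0 t_le8 t_le_half {t_h}.
rewrite /tail_bound; case: ltnP => [a_lt4|a_ge4].
  have [a_eq|a_eq] : a = 2%N \/ a = 3%N by lia.
    by rewrite a_eq /= in t_le8 *; nra.
  rewrite a_eq /= in t_le8 *.
  have t_sq : t ^+ 2 <= 9 / 64 by nra.
  have := exprn_ge0 2 t_ge0; nra.
have [b a_eq] : exists b, a = b.+1 by exists a.-1; lia.
rewrite a_eq /= in a_ge4 *.
have w_gt0 : 0 < 2 ^+ b :> R by rewrite exprn_gt0.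
have tb : t ^+ b <= (2 ^+ b)^-1 by rewrite -exprVn lerXn2r ?nnegrE ?invr_ge0 //; lra.
have a_sq : b.+1%:R ^+ 2 <= 2 * 2 ^+ b :> R.
  by rewrite -exprS -natrX -(natrX R 2) ler_nat sq_le_pow2.
apply: (@le_trans _ _ ((b.+1%:R * (2 ^+ b)^-1) ^+ 2)).
  rewrite lerXn2r ?nnegrE ?mulr_ge0 ?exprn_ge0 ?invr_ge0 ?(ltW w_gt0) //.
  by rewrite ler_wpM2l.
have -> : 4 / 2 ^+ b.+1 = (2 * 2 ^+ b) / (2 ^+ b) ^+ 2 :> R.
  by rewrite exprS; field; rewrite gt_eqF.
by rewrite exprMn exprVn ler_wpM2r // invr_ge0 exprn_ge0 // ltW.
Qed.

Lemma tail_bound_le1 a : tail_bound a <= 1.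
Proof.
rewrite /tail_bound; case: ltnP => [_|a_ge4]; first lra.
rewrite ler_pdivrMr ?exprn_gt0 // mul1r.
apply: (@le_trans _ _ (2 ^+ 2)); first by rewrite expr2; lra.
by rewrite ler_eXn2l ?ltr1n //; lia.
Qed.

End TailBound.

Arguments tail_bound {R} a.

Section SmallMassTotal.
Variable R : realType.
Variable h : nat.
Hypothesis h_ge8 : (8 <= h)%N.

(* Each fibre size a >= 2 contributes at most b_a times the contribution
   y = (1/h)^D of a singleton fibre. *)
Lemma small_mass_le (D : R) a : 2 <= D -> (2 <= a)%N ->
  small_mass h D a <= tail_bound a * powR h%:R^-1 D.
Proof.
move=> D_ge2 a_ge2; rewrite /small_mass; case: ifP => ah; last first.
  by rewrite mulr_ge0 ?tail_bound_ge0 ?powR_ge0.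
have h_gt0 : 0 < h%:R :> R by rewrite ltr0n; lia.
set x : R := a%:R * (a%:R / h%:R) ^+ a.-1.
have mass_eq : mass h a = x * h%:R^-1 :> R.
  by rewrite /mass /x -[X in _ ^+ X](prednK (ltnW a_ge2)) exprSr; ring.
have x_sq := ratio_sq_le R h_ge8 a_ge2 ah.
have x_gt0 : 0 < x by rewrite mulr_gt0 ?exprn_gt0 ?divr_gt0 ?ltr0n //; lia.
have x_le1 : x <= 1.
  rewrite -(expr_le1 (_ : 0 < 2)%N (ltW x_gt0)) //.
  exact: le_trans x_sq (tail_bound_le1 _ _).
rewrite mass_eq powRM ?invr_ge0 ?(ltW x_gt0) //.
apply: ler_wpM2r; first exact: powR_ge0.
apply: (@le_trans _ _ (powR x 2)); first by rewrite ger_powR ?x_gt0.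
by rewrite (powR_mulrn 2 (ltW x_gt0)).
Qed.

(* The total small mass is 1 (empty fibres) + y (singletons) + at most y. *)
Lemma total_small_mass_le (D : R) : 2 <= D ->
  \sum_(a < h.+1) small_mass h D a <= 1 + 2 * powR h%:R^-1 D.
Proof.
move=> D_ge2; set y := powR h%:R^-1 D.
rewrite -(big_mkord xpredT) big_ltn // big_ltn; last by lia.
have -> : small_mass h D 0 = 1 by rewrite /small_mass /mass expr0 powR1.
have -> : small_mass h D 1 = y.
  by rewrite /small_mass /mass ifT ?expr1 ?div1r //=; lia.
rewrite lerD2l mulr_natl mulr2n lerD2l.
apply: (@le_trans _ _ (\sum_(2 <= a < h.+1) tail_bound a * y)).
  by apply: ler_sum_nat => a /andP[a_ge2 _]; exact: small_mass_le.
by rewrite -mulr_suml ler_piMl ?powR_ge0 ?tail_bound_sum.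
Qed.

End SmallMassTotal.

Lemma pow_le_expR (R : realType) (x y : R) (n : nat) : 0 <= x -> x <= 1 + y ->
  x ^+ n <= expR (n%:R * y).
Proof.
move=> x_ge0 x_le; rewrite expRM_natl lerXn2r ?nnegrE ?expR_ge0 //.
exact: le_trans x_le (expR_ge1Dx y).
Qed.

Unset Implicit Arguments.

Theorem lemmaB4 (R : realType) (h k : nat) (C : R) :
  (1 <= k)%N -> 3 <= C ->
  \sum_(pi : {ffun 'I_h -> 'I_k})
     ((\prod_(i < k) powR (fiber_size pi i)%:R (C * (fiber_size pi i)%:R))
        / powR h%:R (C * h%:R))
  <= Num.max ((k%:R : R) ^+ 7)
       ((h * k + 1)%:R * expR (2 * k%:R / powR h%:R (C - 1))).
Proof.
move=> k_gt0 C_ge3; rewrite le_max.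
have [h_le7|h_ge8] := leqP h 7.
  by rewrite small_h_bound //; lra.
apply/orP; right.
have h_gt0 : (0 < h)%N by lia.
set y := powR (h%:R^-1 : R) (C - 1).
set total := \sum_(a < h.+1) small_mass h (C - 1) a.
have total_ge0 : 0 <= total by apply: sumr_ge0 => a _; exact: small_mass_ge0.
have total_le : total <= 1 + 2 * y by apply: total_small_mass_le => //; lra.
have -> : 2 * k%:R / powR h%:R (C - 1) = k%:R * (2 * y).
  by rewrite /y powR_invl ?ltr0n //; ring.
apply: (@le_trans _ _ (k%:R * total ^+ k.-1)).
  by apply: sum_le_total_small_mass => //; lra.
apply: ler_pM; rewrite ?exprn_ge0 ?ler_nat //; first nia.
apply: le_trans (pow_le_expR _ total_ge0 total_le) _.
rewrite ler_expR; apply: ler_wpM2r; last by rewrite ler_nat leq_pred.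
by rewrite mulr_ge0 ?powR_ge0.
Qed.
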